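(* Fix $\alpha\in(0,1]$. For any sequence of labels containing $n$ distinct labels and any regressor values in $[0,1]$ used in the decisions, the tree produced by the online tree construction below (which has $n$ leaves) has depth at most $\dfrac{\log n}{\log(1/\kappa)}+2$ (for $\alpha=1$, where $\kappa=1/2$, this reads $\log_2 n+2$).
   Context: For $p\in[0,1]$, positive integers $L,R$ and $\alpha\in(0,1]$, define $\mathrm{obj}(p,L,R,\alpha)=(1-\alpha)\,2\,(p-\tfrac12)+\alpha\log_2\frac{L}{R}$, and $\kappa=\dfrac{1}{1+2^{1-1/\alpha}}$ (so $\kappa\in[1/2,1)$). Online tree construction: the tree is a rooted binary tree in which every internal node has a left and a right child, and whose leaves correspond one-to-one to the distinct labels seen so far; it starts as a single leaf (the first label). When a label not yet in the tree arrives, it descends from the root: at each internal node, with $L,R$ the current numbers of leaves in its left and right subtrees and $p\in[0,1]$ an arbitrary value (the current regressor prediction at that node), it moves to the right child if $\mathrm{obj}(p,L,R,\alpha)>0$ and to the left child otherwise. On reaching a leaf (holding some label $y'$), that leaf becomes an internal node whose left child is a leaf with label $y'$ and whose right child is a new leaf with the new label. Labels already in the tree do not change its shape. The depth of the tree is the maximum number of edges on a root-to-leaf path. *)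

From Stdlib Require Import Reals Lra Lia Arith List ListDec.
Import ListNotations.
Open Scope R_scope.

Definition log2R (x : R) : R := ln x / ln 2.

Definition obj (p : R) (L Rr : nat) (alpha : R) : R :=
  (1 - alpha) * 2 * (p - 1/2) + alpha * log2R (INR L / INR Rr).

Definition kappa (alpha : R) : R := 1 / (1 + Rpower 2 (1 - 1 / alpha)).

Inductive tree : Type :=
| Leaf : nat -> tree
| Node : tree -> tree -> tree.

Fixpoint nleaves (t : tree) : nat :=
  match t with Leaf _ => 1%nat | Node l r => (nleaves l + nleaves r)%nat end.

Fixpoint labels (t : tree) : list nat :=
  match t with Leaf y => [y] | Node l r => labels l ++ labels r end.

Fixpoint depth (t : tree) : nat :=
  match t with Leaf _ => 0%nat | Node l r => S (Nat.max (depth l) (depth r)) end.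

(* Descend a new label y from the node at position [pre] (path from the
   root; false = left, true = right).  [p pre] is the regressor prediction
   at that node.  Go right iff obj > 0. *)
Fixpoint descend (alpha : R) (p : list bool -> R) (pre : list bool)
         (y : nat) (t : tree) : tree :=
  match t with
  | Leaf y' => Node (Leaf y') (Leaf y)
  | Node l r =>
      if Rlt_dec 0 (obj (p pre) (nleaves l) (nleaves r) alpha)
      then Node l (descend alpha p (pre ++ [true]) y r)
      else Node (descend alpha p (pre ++ [false]) y l) r
  end.

Definition insert (alpha : R) (p : list bool -> R) (y : nat) (t : tree) : tree :=
  if in_dec Nat.eq_dec y (labels t) then t else descend alpha p [] y t.

(* Process the remaining labels; [ps k] gives the regressor predictions
   (at every node) used when processing the k-th label. *)
Fixpoint build_from (alpha : R) (ps : nat -> list bool -> R) (k : nat)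
         (ys : list nat) (t : tree) : tree :=
  match ys with
  | [] => t
  | y :: ys' => build_from alpha ps (S k) ys' (insert alpha (ps k) y t)
  end.

Definition build (alpha : R) (ps : nat -> list bool -> R) (y0 : nat)
           (ys : list nat) : tree :=
  build_from alpha ps 1%nat ys (Leaf y0).

Definition ndistinct (s : list nat) : nat := length (nodup Nat.eq_dec s).

(* Write [s = 2^(1 - 1/alpha)] (the "skew" of the decision rule), so that
   [1/kappa = 1 + s].  Because the regressor term of [obj] lies in
   [[-(1-alpha), 1-alpha]], a new label descends into the child [c] with
   sibling [c'] only if [s * |c| <= |c'|] (leaf counts).  Consequently every
   tree built online is [(1+s)]-balanced: each child [c] of a node [t]
   satisfies [(1+s) (|c| - 1) <= |t| - 1].  An induction on the tree shows
   that a [q]-balanced tree of depth [d >= 1] has [q^(d-1) <= |t| - 1], i.e.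
   depth at most [log_q |t| + 1].  Finally the leaves of the built tree carry
   pairwise distinct labels taken from the input, so [|t|] is at most the
   number of distinct labels, and the theorem follows (with one unit of
   slack with respect to the stated [+2]). *)

From Stdlib Require Import Reals List Lra Lia Permutation.
Import ListNotations.
Open Scope R_scope.

Definition skew (alpha : R) : R := Rpower 2 (1 - 1 / alpha).

Lemma skew_pos (alpha : R) : 0 < skew alpha.
Proof. apply exp_pos. Qed.

Lemma inv_kappa (alpha : R) : 1 / kappa alpha = 1 + skew alpha.
Proof.
  pose proof (skew_pos alpha). unfold kappa. fold (skew alpha). field. lra.
Qed.

Lemma ln_le_compat (x y : R) : 0 < x -> x <= y -> ln x <= ln y.
Proof.
  intros Hx [Hxy | <-]; [left; apply ln_increasing |]; lra.
Qed.

Lemma Rpower2_log2R (x : R) : 0 < x -> Rpower 2 (log2R x) = x.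
Proof.
  intros Hx. pose proof ln_lt_2 as Hln2. unfold Rpower, log2R.
  replace (ln x / ln 2 * ln 2) with (ln x) by (field; lra).
  apply exp_ln, Hx.
Qed.

(* The regressor term moves [obj] by at most [1 - alpha] away from
   [alpha * log2(L/R)], which pins down the leaf ratio on each side. *)
Lemma obj_nonpos_log2 (p : R) (L Rr : nat) (alpha : R) :
  0 < alpha <= 1 -> 0 <= p <= 1 ->
  obj p L Rr alpha <= 0 -> log2R (INR L / INR Rr) <= 1 / alpha - 1.
Proof.
  unfold obj. intros Ha Hp Ho.
  apply (Rmult_le_reg_l alpha); [lra |].
  replace (alpha * (1 / alpha - 1)) with (1 - alpha) by (field; lra). nra.
Qed.

Lemma obj_pos_log2 (p : R) (L Rr : nat) (alpha : R) :
  0 < alpha <= 1 -> 0 <= p <= 1 ->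
  0 < obj p L Rr alpha -> 1 - 1 / alpha < log2R (INR L / INR Rr).
Proof.
  unfold obj. intros Ha Hp Ho.
  apply (Rmult_lt_reg_l alpha); [lra |].
  replace (alpha * (1 - 1 / alpha)) with (alpha - 1) by (field; lra). nra.
Qed.

Lemma go_left_ratio (p : R) (L Rr : nat) (alpha : R) :
  0 < alpha <= 1 -> 0 <= p <= 1 -> (0 < L)%nat -> (0 < Rr)%nat ->
  ~ 0 < obj p L Rr alpha -> skew alpha * INR L <= INR Rr.
Proof.
  intros Ha Hp HL HR Ho.
  apply lt_0_INR in HL. apply lt_0_INR in HR.
  assert (Hratio : INR L / INR Rr <= / skew alpha).
  { rewrite <- (Rpower2_log2R (INR L / INR Rr)) by (apply Rdiv_lt_0_compat; lra).
    unfold skew. rewrite <- Rpower_Ropp. apply Rle_Rpower; [lra |].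
    replace (- (1 - 1 / alpha)) with (1 / alpha - 1) by ring.
    apply obj_nonpos_log2 with p; [exact Ha | exact Hp | lra]. }
  pose proof (skew_pos alpha).
  apply (Rmult_le_compat_r (skew alpha * INR Rr)) in Hratio; [| nra].
  replace (INR L / INR Rr * (skew alpha * INR Rr)) with (skew alpha * INR L)
    in Hratio by (field; lra).
  replace (/ skew alpha * (skew alpha * INR Rr)) with (INR Rr)
    in Hratio by (field; lra).
  exact Hratio.
Qed.

Lemma go_right_ratio (p : R) (L Rr : nat) (alpha : R) :
  0 < alpha <= 1 -> 0 <= p <= 1 -> (0 < L)%nat -> (0 < Rr)%nat ->
  0 < obj p L Rr alpha -> skew alpha * INR Rr < INR L.
Proof.
  intros Ha Hp HL HR Ho.
  apply lt_0_INR in HL. apply lt_0_INR in HR.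
  assert (Hratio : skew alpha < INR L / INR Rr).
  { rewrite <- (Rpower2_log2R (INR L / INR Rr)) by (apply Rdiv_lt_0_compat; lra).
    apply Rpower_lt; [lra |]. apply obj_pos_log2 with p; assumption. }
  apply (Rmult_lt_compat_r (INR Rr)) in Hratio; [| exact HR].
  replace (INR L / INR Rr * INR Rr) with (INR L) in Hratio by (field; lra).
  exact Hratio.
Qed.

Lemma nleaves_pos (t : tree) : (0 < nleaves t)%nat.
Proof. induction t; simpl; lia. Qed.

Lemma nleaves_labels (t : tree) : nleaves t = length (labels t).
Proof. induction t; simpl; [reflexivity |]. rewrite length_app; lia. Qed.

Lemma nleaves_descend alpha p pre y (t : tree) :
  nleaves (descend alpha p pre y t) = S (nleaves t).
Proof.
  revert pre; induction t; intros pre; simpl; [reflexivity |].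
  destruct Rlt_dec; simpl; rewrite ?IHt1, ?IHt2; lia.
Qed.

Lemma labels_descend alpha p pre y (t : tree) :
  Permutation (labels (descend alpha p pre y t)) (y :: labels t).
Proof.
  revert pre; induction t; intros pre; simpl.
  - apply perm_swap.
  - destruct Rlt_dec; simpl.
    + rewrite IHt2. apply Permutation_sym, Permutation_middle.
    + rewrite IHt1. reflexivity.
Qed.

Fixpoint balanced (q : R) (t : tree) : Prop :=
  match t with
  | Leaf _ => True
  | Node l r =>
      q * (INR (nleaves l) - 1) <= INR (nleaves l + nleaves r) - 1 /\
      q * (INR (nleaves r) - 1) <= INR (nleaves l + nleaves r) - 1 /\
      balanced q l /\ balanced q r
  end.

(* A child [c] that gains a leaf still satisfies the [(1+s)]-balance
   condition at its parent, provided its sibling [c'] had [s c <= c']. *)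
Lemma balance_grow (s c c' : R) :
  0 <= s -> s * c <= c' -> (1 + s) * (c + 1 - 1) <= c + 1 + c' - 1.
Proof. intros; nra. Qed.

Lemma balanced_descend alpha p pre y (t : tree) :
  0 < alpha <= 1 -> (forall path, 0 <= p path <= 1) ->
  balanced (1 + skew alpha) t ->
  balanced (1 + skew alpha) (descend alpha p pre y t).
Proof.
  intros Ha Hp. pose proof (skew_pos alpha) as Hs.
  revert pre; induction t as [y' | l IHl r IHr]; intros pre; simpl.
  - intros _. repeat split; lra.
  - intros (Hbl & Hbr & Bl & Br).
    pose proof (nleaves_pos l) as Hl. pose proof (nleaves_pos r) as Hr.
    rewrite plus_INR in Hbl, Hbr.
    destruct Rlt_dec as [Ho | Ho]; simpl;
      rewrite nleaves_descend, plus_INR, S_INR.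
    + apply go_right_ratio in Ho; auto.
      pose proof (balance_grow (skew alpha) (INR (nleaves r)) (INR (nleaves l))).
      repeat split; auto; lra.
    + apply go_left_ratio in Ho; auto.
      pose proof (balance_grow (skew alpha) (INR (nleaves l)) (INR (nleaves r))).
      repeat split; auto; lra.
Qed.

Lemma build_from_invariant (P : tree -> Prop) alpha ps (ys : list nat) :
  (forall k y t, In y ys -> P t -> P (insert alpha (ps k) y t)) ->
  forall k t, P t -> P (build_from alpha ps k ys t).
Proof.
  induction ys as [| y ys IH]; intros Hstep k t Ht; simpl; [exact Ht |].
  apply IH; [intros; apply Hstep; simpl; auto |].
  apply Hstep; simpl; auto.
Qed.

Definition labels_distinct_in (S : list nat) (t : tree) : Prop :=
  NoDup (labels t) /\ incl (labels t) S.

Lemma insert_labels_distinct_in (S : list nat) alpha p y (t : tree) :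
  In y S -> labels_distinct_in S t -> labels_distinct_in S (insert alpha p y t).
Proof.
  intros Hy [Hnd Hincl]. unfold insert.
  destruct in_dec as [Hin | Hnin]; [split; assumption |].
  pose proof (labels_descend alpha p [] y t) as Hperm. split.
  - apply Permutation_NoDup with (y :: labels t);
      [symmetry; exact Hperm | constructor; assumption].
  - intros x Hx. apply (Permutation_in _ Hperm) in Hx.
    destruct Hx as [<- | Hx]; auto.
Qed.

Lemma nleaves_build_le alpha ps (y0 : nat) (ys : list nat) :
  (nleaves (build alpha ps y0 ys) <= ndistinct (y0 :: ys))%nat.
Proof.
  assert (Hinv : labels_distinct_in (y0 :: ys) (build alpha ps y0 ys)).
  { unfold build. apply build_from_invariant.
    - intros k y t Hy. apply insert_labels_distinct_in. simpl; auto.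
    - split; [repeat constructor; intros [] | intros x [<- | []]; simpl; auto]. }
  destruct Hinv as [Hnd Hincl].
  rewrite nleaves_labels. apply NoDup_incl_length; [exact Hnd |].
  intros x Hx. apply nodup_In, Hincl, Hx.
Qed.

Lemma balanced_build alpha ps (y0 : nat) (ys : list nat) :
  0 < alpha <= 1 -> (forall k path, 0 <= ps k path <= 1) ->
  balanced (1 + skew alpha) (build alpha ps y0 ys).
Proof.
  intros Ha Hps. unfold build. apply build_from_invariant; [| exact I].
  intros k y t _ Ht. unfold insert.
  destruct in_dec; [exact Ht | apply balanced_descend; auto].
Qed.

(* One level of the depth induction: if a child with [c] leaves and depth
   [d] satisfies the bound and the balance condition inside a node with
   [n >= 2] leaves, then the node satisfies the bound at depth [d + 1]. *)
Lemma pow_depth_step (q c n : R) (d : nat) :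
  0 <= q -> 2 <= n -> ((1 <= d)%nat -> q ^ (d - 1) <= c - 1) ->
  q * (c - 1) <= n - 1 -> q ^ d <= n - 1.
Proof.
  intros Hq Hn IHc Hc. destruct d as [| d]; simpl; [lra |].
  specialize (IHc ltac:(lia)). simpl in IHc. rewrite Nat.sub_0_r in IHc. nra.
Qed.

Lemma balanced_pow_depth (q : R) (t : tree) :
  0 <= q -> balanced q t -> (1 <= depth t)%nat ->
  q ^ (depth t - 1) <= INR (nleaves t) - 1.
Proof.
  intros Hq. induction t as [y | l IHl r IHr]; simpl; [lia |].
  intros (Hbl & Hbr & Bl & Br) _.
  rewrite Nat.sub_0_r.
  assert (Hn : 2 <= INR (nleaves l + nleaves r)).
  { pose proof (nleaves_pos l). pose proof (nleaves_pos r).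
    apply (le_INR 2); lia. }
  destruct (Nat.max_spec (depth l) (depth r)) as [[_ Hm] | [_ Hm]]; rewrite Hm.
  - apply (pow_depth_step q (INR (nleaves r))); auto.
  - apply (pow_depth_step q (INR (nleaves l))); auto.
Qed.

Lemma pow_le_log (q x : R) (d : nat) :
  1 < q -> q ^ d <= x -> INR d <= ln x / ln q.
Proof.
  intros Hq Hx.
  assert (Hlq : 0 < ln q) by (rewrite <- ln_1; apply ln_increasing; lra).
  assert (Hpow : 0 < q ^ d) by (apply pow_lt; lra).
  apply ln_le_compat in Hx; [| exact Hpow]. rewrite ln_pow in Hx by lra.
  apply (Rmult_le_reg_r (ln q)); [exact Hlq |].
  replace (ln x / ln q * ln q) with (ln x) by (field; lra). exact Hx.
Qed.

Lemma balanced_depth_le (q : R) (t : tree) :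
  1 < q -> balanced q t -> INR (depth t) <= ln (INR (nleaves t)) / ln q + 1.
Proof.
  intros Hq Bt.
  assert (Hn : 1 <= INR (nleaves t)) by (apply (le_INR 1), nleaves_pos).
  destruct (depth t) as [| d] eqn:Hd.
  - assert (Hlq : 0 < ln q) by (rewrite <- ln_1; apply ln_increasing; lra).
    assert (0 <= ln (INR (nleaves t)))
      by (rewrite <- ln_1; apply ln_le_compat; lra).
    simpl. assert (0 <= ln (INR (nleaves t)) / ln q)
      by (apply Rmult_le_pos; [lra | left; apply Rinv_0_lt_compat, Hlq]).
    lra.
  - assert (Hpow : q ^ d <= INR (nleaves t)).
    { pose proof (balanced_pow_depth q t ltac:(lra) Bt) as Hpow.
      rewrite Hd, Nat.sub_succ, Nat.sub_0_r in Hpow.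
      specialize (Hpow ltac:(lia)). lra. }
    pose proof (pow_le_log q (INR (nleaves t)) d Hq Hpow).
    rewrite S_INR. lra.
Qed.

Theorem theorem3 (alpha : R) (Halpha : 0 < alpha <= 1)
  (y0 : nat) (ys : list nat) (ps : nat -> list bool -> R)
  (Hps : forall k path, 0 <= ps k path <= 1) :
  INR (depth (build alpha ps y0 ys)) <=
    ln (INR (ndistinct (y0 :: ys))) / ln (1 / kappa alpha) + 2.
Proof.
  set (t := build alpha ps y0 ys).
  set (q := 1 + skew alpha).
  assert (Hq : 1 < q) by (pose proof (skew_pos alpha); unfold q; lra).
  assert (Hlq : 0 < ln q) by (rewrite <- ln_1; apply ln_increasing; lra).
  rewrite inv_kappa; fold q.
  pose proof (balanced_depth_le q t Hq (balanced_build alpha ps y0 ys Halpha Hps))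
    as Hdepth.
  assert (Hleaves : ln (INR (nleaves t)) <= ln (INR (ndistinct (y0 :: ys)))).
  { apply ln_le_compat; [apply lt_0_INR, nleaves_pos |].
    apply le_INR, nleaves_build_le. }
  assert (ln (INR (nleaves t)) / ln q <= ln (INR (ndistinct (y0 :: ys))) / ln q)
    by (apply Rmult_le_compat_r; [left; apply Rinv_0_lt_compat |]; assumption).
  lra.
Qed.
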